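(* Let $A\in\mathbb{R}^{r\times n}$ ($r\le n$) have full row rank with thin SVD $A=U\Sigma V$, singular values $\sigma_1\ge\dots\ge\sigma_r>0$, and rows $V_1,\dots,V_r$ of $V$. Let $F\in\mathbb{R}^{K\times n}$ with rows $F_1,\dots,F_K$ satisfy $FA^T\ne0$, and let $\lambda'>0$. Let $D^*=FA^T(AA^T)^{-1}$ and $\tilde D^*=FA^T(AA^T+\lambda'I)^{-1}$. For $M\in\mathbb{R}^{K\times r}$ define $f(M)=\|F-MA\|_F^2$, $\epsilon(M)=f(M)/\|MA\|_F^2+1$, $\alpha(M)=\|M\|_F^2$, $\gamma(M)=\|M\|_F^2\|A\|_F^2/\|MA\|_F^2$. Let $a_i^2=\sum_{k=1}^K(F_kV_i^T)^2$ and $\Omega=\{j: a_j\neq0\}$. Then: (1) $f(\tilde D^* )>f(D^* )$; (2) $\epsilon(\tilde D^* )>\epsilon(D^* )$; (3) $\alpha(\tilde D^* )<\alpha(D^* )$; (4) if the values $\{\sigma_i\}_{i\in\Omega}$ are not all equal (in particular $|\Omega|>1$), then $\gamma(\tilde D^* )<\gamma(D^* )$, and otherwise $\gamma(\tilde D^* )=\gamma(D^* )$.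
   Context: $D^*$ minimizes $\|F-DA\|_F^2$ and $\tilde D^*$ minimizes $\|F-DA\|_F^2+\lambda'\|D\|_F^2$; $f,\epsilon,\alpha,\gamma$ are the absolute fitting error, fitting error, absolute spectral risk and spectral risk. *)

From HB Require Import structures.
From mathcomp Require Import all_boot all_order all_algebra.
Set Implicit Arguments. Unset Strict Implicit. Unset Printing Implicit Defensive.
Import Order.TTheory GRing.Theory Num.Theory.
Local Open Scope ring_scope.

Definition frob2 {R : realFieldType} {m n : nat} (M : 'M[R]_(m, n)) : R :=
  \sum_(i < m) \sum_(j < n) (M i j) ^+ 2.

Definition Dstar {R : realFieldType} {K r n : nat}
  (F : 'M[R]_(K, n)) (A : 'M[R]_(r, n)) : 'M[R]_(K, r) :=
  F *m A^T *m invmx (A *m A^T).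

Definition Dtilde {R : realFieldType} {K r n : nat}
  (F : 'M[R]_(K, n)) (A : 'M[R]_(r, n)) (lam : R) : 'M[R]_(K, r) :=
  F *m A^T *m invmx (A *m A^T + lam%:M).

Definition abs_fit_err {R : realFieldType} {K r n : nat}
  (F : 'M[R]_(K, n)) (A : 'M[R]_(r, n)) (M : 'M[R]_(K, r)) : R :=
  frob2 (F - M *m A).

Definition fit_err {R : realFieldType} {K r n : nat}
  (F : 'M[R]_(K, n)) (A : 'M[R]_(r, n)) (M : 'M[R]_(K, r)) : R :=
  abs_fit_err F A M / frob2 (M *m A) + 1.

Definition abs_spec_risk {R : realFieldType} {K r : nat} (M : 'M[R]_(K, r)) : R :=
  frob2 M.

Definition spec_risk {R : realFieldType} {K r n : nat}
  (A : 'M[R]_(r, n)) (M : 'M[R]_(K, r)) : R :=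
  frob2 M * frob2 A / frob2 (M *m A).

Definition a2 {R : realFieldType} {K r n : nat}
  (F : 'M[R]_(K, n)) (V : 'M[R]_(r, n)) (i : 'I_r) : R :=
  \sum_(k < K) ((F *m V^T) k i) ^+ 2.

(* Omega = { j | a_j <> 0 }  (a_j <> 0 iff a_j^2 <> 0) *)
Definition Omega {R : realFieldType} {K r n : nat}
  (F : 'M[R]_(K, n)) (V : 'M[R]_(r, n)) : {set 'I_r} :=
  [set j | a2 F V j != 0].

From HB Require Import structures.
From mathcomp Require Import all_boot all_order all_algebra.
From mathcomp Require Import ring lra.
Set Implicit Arguments.
Unset Strict Implicit.
Unset Printing Implicit Defensive.
Import Order.TTheory GRing.Theory Num.Theory.
Local Open Scope ring_scope.

(** In the singular bases both solutions are spectral filters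
    D = F V^T diag(d) U^T, with the ridge filter d_i = σ_i / (σ_i^2 + λ) for
    Dtilde and d_i = 1 / σ_i (the same formula at λ = 0) for Dstar.  With the
    gains t_i = d_i σ_i, which lie in (0, 1) for Dtilde and equal 1 for Dstar,
      f = |F - F V^T V|^2 + Σ a_i^2 (1 - t_i)^2,   |D A|^2 = Σ a_i^2 t_i^2,
      α = Σ a_i^2 d_i^2,
    so (1)-(3) follow termwise.  Since d_i^2 = t_i^2 / σ_i^2, claim (4) reads
      (Σ a_i^2) (Σ a_i^2 t_i^2 / σ_i^2) < (Σ a_i^2 / σ_i^2) (Σ a_i^2 t_i^2),
    which is Chebyshev's sum inequality for the weights a_i^2 and the oppositely
    ordered sequences 1 / σ_i^2 and t_i^2; it is strict exactly when σ is not
    constant on the support Ω of the weights. *)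

Lemma sumr_gt0_at (R : numDomainType) (I : finType) (F : I -> R) j :
  (forall i, 0 <= F i) -> 0 < F j -> 0 < \sum_i F i.
Proof.
move=> F_ge0 Fj_gt0; rewrite (bigD1 j) //=.
by apply: (lt_le_trans Fj_gt0); rewrite lerDl sumr_ge0.
Qed.

Lemma ltr_sum_at (R : numDomainType) (I : finType) (F G : I -> R) j :
  (forall i, F i <= G i) -> F j < G j -> \sum_i F i < \sum_i G i.
Proof.
move=> leFG ltFGj; rewrite -subr_gt0 -sumrB.
by apply: (sumr_gt0_at (j := j)) => [i|]; rewrite ?subr_ge0 ?subr_gt0.
Qed.

Lemma chebyshev_sum_identity (R : comNzRingType) k (a u w : 'I_k -> R) :
  \sum_i \sum_j a i * a j * ((u i - u j) * (w i - w j)) =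
  2 * ((\sum_i a i) * (\sum_i a i * (u i * w i))
       - (\sum_i a i * u i) * (\sum_i a i * w i)).
Proof.
pose S := \sum_i \sum_j a i * a j * (u i * (w i - w j)).
have -> : \sum_i \sum_j a i * a j * ((u i - u j) * (w i - w j)) = S + S.
  rewrite {2}/S [in RHS]exchange_big -big_split; apply: eq_bigr => i _.
  by rewrite -big_split; apply: eq_bigr => j _ /=; ring.
have -> : S = (\sum_i a i) * (\sum_i a i * (u i * w i))
              - (\sum_i a i * u i) * (\sum_i a i * w i).
  rewrite mulrC !big_distrl -sumrB; apply: eq_bigr => i _ /=.
  rewrite !big_distrr -sumrB; apply: eq_bigr => j _ /=; ring.
ring.
Qed.

Lemma chebyshev_sum_lt (R : realFieldType) k (a u w : 'I_k -> R) i0 j0 :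
  (forall i, 0 <= a i) -> (forall i j, (u i - u j) * (w i - w j) <= 0) ->
  a i0 != 0 -> a j0 != 0 -> (u i0 - u j0) * (w i0 - w j0) < 0 ->
  (\sum_i a i) * (\sum_i a i * (u i * w i)) <
  (\sum_i a i * u i) * (\sum_i a i * w i).
Proof.
move=> a_ge0 opp ai0 aj0 opp_lt.
have a_gt0 i : a i != 0 -> 0 < a i by rewrite lt0r => ->; rewrite a_ge0.
have : 0 < - \sum_i \sum_j a i * a j * ((u i - u j) * (w i - w j)).
  rewrite -sumrN; apply: (sumr_gt0_at (j := i0)) => [i|].
    by rewrite -sumrN sumr_ge0 // => j _; rewrite -mulrN mulr_ge0 ?mulr_ge0 ?oppr_ge0.
  rewrite -sumrN; apply: (sumr_gt0_at (j := j0)) => [j|].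
    by rewrite -mulrN mulr_ge0 ?mulr_ge0 ?oppr_ge0.
  by rewrite -mulrN mulr_gt0 ?mulr_gt0 ?oppr_gt0 ?a_gt0.
rewrite chebyshev_sum_identity; lra.
Qed.

Lemma chebyshev_sum_eq (R : realFieldType) k (a u w : 'I_k -> R) :
  (forall i j, a i != 0 -> a j != 0 -> u i = u j) ->
  (\sum_i a i) * (\sum_i a i * (u i * w i)) =
  (\sum_i a i * u i) * (\sum_i a i * w i).
Proof.
move=> u_const.
have : \sum_i \sum_j a i * a j * ((u i - u j) * (w i - w j)) = 0.
  apply: big1 => i _; apply: big1 => j _.
  have [-> | ai] := eqVneq (a i) 0; first by rewrite !mul0r.
  have [-> | aj] := eqVneq (a j) 0; first by rewrite mulr0 mul0r.
  by rewrite (u_const i j ai aj) subrr !mul0r mulr0.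
rewrite chebyshev_sum_identity; lra.
Qed.

Section Frobenius.
Variable R : realFieldType.

Lemma frob2_trace m n (M : 'M[R]_(m, n)) : frob2 M = \tr (M *m M^T).
Proof.
rewrite /frob2 /mxtrace; apply: eq_bigr => i _; rewrite mxE.
by apply: eq_bigr => j _; rewrite mxE expr2.
Qed.

Lemma frob2_ge0 m n (M : 'M[R]_(m, n)) : 0 <= frob2 M.
Proof. by apply: sumr_ge0 => i _; apply: sumr_ge0 => j _; apply: sqr_ge0. Qed.

Lemma frob2_eq0 m n (M : 'M[R]_(m, n)) : (frob2 M == 0) = (M == 0).
Proof.
apply/eqP/eqP => [M0 | ->]; last first.
  by apply: big1 => i _; apply: big1 => j _; rewrite mxE expr0n.
apply/matrixP => i j; rewrite mxE; apply/eqP; rewrite -sqrf_eq0; apply/eqP.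
have row_i0 := psumr_eq0P (fun i _ => sumr_ge0 _ (fun j _ => sqr_ge0 (M i j))) M0.
exact: psumr_eq0P (fun j _ => sqr_ge0 (M i j)) (row_i0 i isT) j isT.
Qed.

Lemma frob2_mulmx_orthonormal m k l (X : 'M[R]_(m, k)) (V : 'M[R]_(k, l)) :
  V *m V^T = 1%:M -> frob2 (X *m V) = frob2 X.
Proof. by move=> VVt; rewrite !frob2_trace trmx_mul !mulmxA -(mulmxA X) VVt mulmx1. Qed.

Lemma frob2D_orthogonal m k (X Y : 'M[R]_(m, k)) :
  X *m Y^T = 0 -> frob2 (X + Y) = frob2 X + frob2 Y.
Proof.
move=> XYt; rewrite !frob2_trace linearD /= mulmxDl !mulmxDr XYt.
by rewrite -[Y *m X^T]trmxK trmx_mul trmxK XYt trmx0 addr0 add0r mxtraceD.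
Qed.

Lemma frob2_mul_diag m k (G : 'M[R]_(m, k)) (d : 'rV[R]_k) :
  frob2 (G *m diag_mx d) = \sum_i (\sum_l G l i ^+ 2) * d 0 i ^+ 2.
Proof.
rewrite /frob2 exchange_big; apply: eq_bigr => i _; rewrite big_distrl.
by apply: eq_bigr => l _; rewrite mul_mx_diag mxE exprMn.
Qed.

Lemma a2_ge0 K r n (F : 'M[R]_(K, n)) (V : 'M[R]_(r, n)) i : 0 <= a2 F V i.
Proof. by apply: sumr_ge0 => k _; apply: sqr_ge0. Qed.

End Frobenius.

Definition ridge_filter (R : fieldType) (lam x : R) : R := x / (x ^+ 2 + lam).

Section RidgeFilter.
Variable R : realFieldType.
Implicit Types lam x y : R.

Lemma ridge_filter0_gain x : x != 0 -> ridge_filter 0 x * x = 1.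
Proof. by move=> x_neq0; rewrite /ridge_filter addr0 mulrAC -expr2 divff ?expf_neq0. Qed.

Lemma ridge_gain_gt0 lam x : 0 <= lam -> x != 0 -> 0 < ridge_filter lam x * x.
Proof.
move=> lam_ge0 x_neq0; rewrite /ridge_filter mulrAC -expr2.
by rewrite divr_gt0 ?ltr_wpDr // exprn_even_gt0 //.
Qed.

Lemma ridge_gain_lt1 lam x : 0 < lam -> ridge_filter lam x * x < 1.
Proof.
move=> lam_gt0; rewrite /ridge_filter mulrAC -expr2.
have x2_ge0 : 0 <= x ^+ 2 by exact: sqr_ge0.
by rewrite ltr_pdivrMr ?mul1r ?ltrDl //; lra.
Qed.

Lemma ridge_filter_factor lam x :
  x != 0 -> ridge_filter lam x = ridge_filter lam x * x * ridge_filter 0 x.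
Proof. by move=> x_neq0; rewrite -mulrA [x * _]mulrC ridge_filter0_gain ?mulr1. Qed.

Lemma ridge_cross_lt0 lam x y : 0 < lam -> 0 < x -> 0 < y -> x != y ->
  (ridge_filter 0 x ^+ 2 - ridge_filter 0 y ^+ 2) *
  ((ridge_filter lam x * x) ^+ 2 - (ridge_filter lam y * y) ^+ 2) < 0.
Proof.
move=> lam_gt0 x_gt0 y_gt0 x_neq_y.
set s := x ^+ 2; set t := y ^+ 2.
have s_gt0 : 0 < s by rewrite exprn_gt0.
have t_gt0 : 0 < t by rewrite exprn_gt0.
have s_neq_t : s - t != 0 by rewrite subr_eq0 eqrXn2 // ltW.
have -> : (ridge_filter 0 x ^+ 2 - ridge_filter 0 y ^+ 2) *
  ((ridge_filter lam x * x) ^+ 2 - (ridge_filter lam y * y) ^+ 2) =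
  - ((s - t) ^+ 2 * lam * (s / (s + lam) + t / (t + lam)) /
     (s * t * (s + lam) * (t + lam))).
  rewrite /ridge_filter /s /t; field.
  by rewrite !gt_eqF ?addr_gt0 //; lra.
have st_gt0 : 0 < (s - t) ^+ 2 by rewrite lt0r sqrf_eq0 s_neq_t sqr_ge0.
have den_gt0 : 0 < s * t * (s + lam) * (t + lam).
  by rewrite !mulr_gt0 // addr_gt0.
have gains_gt0 : 0 < s / (s + lam) + t / (t + lam).
  by rewrite addr_gt0 // divr_gt0 // addr_gt0.
by rewrite oppr_lt0 divr_gt0 // (mulr_gt0 (mulr_gt0 st_gt0 lam_gt0)).
Qed.

Lemma ridge_filter_sqr_lt lam x : 0 < lam -> x != 0 ->
  ridge_filter lam x ^+ 2 < ridge_filter 0 x ^+ 2.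
Proof.
move=> lam_gt0 x_neq0; rewrite {1}(ridge_filter_factor lam x_neq0) exprMn.
have gain_gt0 := ridge_gain_gt0 (ltW lam_gt0) x_neq0.
rewrite gtr_pMl ?expr_lt1 ?ridge_gain_lt1 ?ltW //.
by rewrite exprn_even_gt0 // /ridge_filter addr0 mulf_neq0 ?invr_eq0 ?expf_neq0.
Qed.

End RidgeFilter.

Section RidgeSums.
Variables (R : realFieldType) (k : nat) (a x : 'I_k -> R) (lam : R).
Hypotheses (a_ge0 : forall i, 0 <= a i) (x_gt0 : forall i, 0 < x i)
  (lam_gt0 : 0 < lam).

Local Notation gain mu i := (ridge_filter mu (x i) * x i).

Let x_neq0 i : x i != 0. Proof. by rewrite gt_eqF. Qed.

Let a_gt0 i : a i != 0 -> 0 < a i.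
Proof. by rewrite lt0r a_ge0 andbT. Qed.

Let weights_gt0 j : a j != 0 -> 0 < \sum_i a i.
Proof. by move=> aj; apply: (sumr_gt0_at (j := j)) => //; apply: a_gt0. Qed.

Let gain_sum_gt0 j : a j != 0 -> 0 < \sum_i a i * gain lam i ^+ 2.
Proof.
move=> aj; apply: (sumr_gt0_at (j := j)) => [i|].
  by rewrite mulr_ge0 ?sqr_ge0.
by rewrite mulr_gt0 ?a_gt0 ?exprn_gt0 ?ridge_gain_gt0 ?ltW.
Qed.

Let gain_sum_le : \sum_i a i * gain lam i ^+ 2 <= \sum_i a i.
Proof.
apply: ler_sum => i _; rewrite ler_piMr // expr_le1 ?ltW ?ridge_gain_lt1 //.
by rewrite ridge_gain_gt0 ?ltW.
Qed.

Let residual0 : \sum_i a i * (1 - gain 0 i) ^+ 2 = 0.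
Proof. by apply: big1 => i _; rewrite ridge_filter0_gain // subrr expr0n mulr0. Qed.

Let gain0_sum : \sum_i a i * gain 0 i ^+ 2 = \sum_i a i.
Proof. by apply: eq_bigr => i _; rewrite ridge_filter0_gain // expr1n mulr1. Qed.

Lemma ridge_residual_lt j : a j != 0 ->
  \sum_i a i * (1 - gain 0 i) ^+ 2 < \sum_i a i * (1 - gain lam i) ^+ 2.
Proof.
move=> aj; rewrite residual0; apply: (sumr_gt0_at (j := j)) => [i|].
  by rewrite mulr_ge0 ?sqr_ge0.
by rewrite mulr_gt0 ?a_gt0 ?exprn_gt0 // subr_gt0 ridge_gain_lt1.
Qed.

Lemma ridge_fit_err_lt j (E : R) : a j != 0 -> 0 <= E ->
  (E + \sum_i a i * (1 - gain 0 i) ^+ 2) / \sum_i a i * gain 0 i ^+ 2 + 1 <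
  (E + \sum_i a i * (1 - gain lam i) ^+ 2) / \sum_i a i * gain lam i ^+ 2 + 1.
Proof.
move=> aj E_ge0; have res_gt0 := ridge_residual_lt aj.
rewrite ltrD2r gain0_sum residual0 addr0 in res_gt0 *.
have P_gt0 := weights_gt0 aj; have Q_gt0 := gain_sum_gt0 aj.
rewrite ltr_pdivrMr // mulrAC ltr_pdivlMr //.
have := gain_sum_le; nra.
Qed.

Lemma ridge_norm_lt j : a j != 0 ->
  \sum_i a i * ridge_filter lam (x i) ^+ 2 < \sum_i a i * ridge_filter 0 (x i) ^+ 2.
Proof.
move=> aj; apply: (ltr_sum_at (j := j)) => [i|].
  by rewrite ler_wpM2l // ltW // ridge_filter_sqr_lt.
by rewrite ltr_pM2l ?a_gt0 // ridge_filter_sqr_lt.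
Qed.

Let filter_sum_factor :
  \sum_i a i * ridge_filter lam (x i) ^+ 2 =
  \sum_i a i * (ridge_filter 0 (x i) ^+ 2 * gain lam i ^+ 2).
Proof.
apply: eq_bigr => i _; rewrite {1}(ridge_filter_factor lam (x_neq0 i)) exprMn.
by rewrite (mulrC (gain lam i ^+ 2)).
Qed.

Let ridge_oppositely_ordered i j :
  (ridge_filter 0 (x i) ^+ 2 - ridge_filter 0 (x j) ^+ 2) *
  (gain lam i ^+ 2 - gain lam j ^+ 2) <= 0.
Proof.
have [-> | xij] := eqVneq (x i) (x j); first by rewrite !subrr mul0r.
exact/ltW/ridge_cross_lt0.
Qed.

Lemma ridge_risk_lt i j (N : R) : 0 < N -> a i != 0 -> a j != 0 -> x i != x j ->
  (\sum_i a i * ridge_filter lam (x i) ^+ 2) * N / \sum_i a i * gain lam i ^+ 2 <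
  (\sum_i a i * ridge_filter 0 (x i) ^+ 2) * N / \sum_i a i * gain 0 i ^+ 2.
Proof.
move=> N_gt0 ai aj xij.
have cheb := chebyshev_sum_lt (u := fun i => ridge_filter 0 (x i) ^+ 2)
  (w := fun i => gain lam i ^+ 2) a_ge0 ridge_oppositely_ordered ai aj
  (ridge_cross_lt0 lam_gt0 (x_gt0 i) (x_gt0 j) xij).
have P_gt0 := weights_gt0 ai; have Q_gt0 := gain_sum_gt0 ai.
rewrite filter_sum_factor gain0_sum mulrAC [X in _ < X]mulrAC ltr_pM2r //.
by rewrite ltr_pdivrMr // mulrAC ltr_pdivlMr // mulrC.
Qed.

Lemma ridge_risk_eq j (N : R) : a j != 0 ->
  (forall i i', a i != 0 -> a i' != 0 -> x i = x i') ->
  (\sum_i a i * ridge_filter lam (x i) ^+ 2) * N / \sum_i a i * gain lam i ^+ 2 =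
  (\sum_i a i * ridge_filter 0 (x i) ^+ 2) * N / \sum_i a i * gain 0 i ^+ 2.
Proof.
move=> aj x_const.
have := chebyshev_sum_eq (u := fun i => ridge_filter 0 (x i) ^+ 2)
  (fun i => gain lam i ^+ 2)
  (fun i i' ai ai' => congr1 (fun y => ridge_filter 0 y ^+ 2) (x_const i i' ai ai')).
have P_gt0 := weights_gt0 aj; have Q_gt0 := gain_sum_gt0 aj.
rewrite filter_sum_factor gain0_sum => cheb; apply/eqP.
rewrite eqr_div ?lt0r_neq0 // mulrAC [X in _ == X]mulrAC.
by rewrite [_ * \sum_i a i]mulrC cheb.
Qed.

End RidgeSums.

Lemma Dstar_Dtilde0 (R : realFieldType) K r n (F : 'M[R]_(K, n)) (A : 'M[R]_(r, n)) :
  Dstar F A = Dtilde F A 0.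
Proof. by rewrite /Dtilde raddf0 addr0. Qed.

Section SpectralFilter.
Variables (R : realFieldType) (r n K : nat).
Variables (U : 'M[R]_r) (sigma : 'rV[R]_r) (V : 'M[R]_(r, n)) (F : 'M[R]_(K, n)).
Hypotheses (UtU : U^T *m U = 1%:M) (UUt : U *m U^T = 1%:M) (VVt : V *m V^T = 1%:M).

Local Notation A := (U *m diag_mx sigma *m V).

Definition spectral_filter_mx (d : 'I_r -> R) : 'M[R]_(K, r) :=
  F *m V^T *m diag_mx (\row_i d i) *m U^T.

Lemma spectral_filter_mxA d :
  spectral_filter_mx d *m A = F *m V^T *m diag_mx (\row_i (d i * sigma 0 i)) *m V.
Proof.
rewrite /spectral_filter_mx !mulmxA -(mulmxA _ U^T U) UtU mulmx1.
rewrite -(mulmxA _ (diag_mx _) (diag_mx sigma)) mulmx_diag.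
by congr (_ *m diag_mx _ *m _); apply/rowP => i; rewrite !mxE.
Qed.

Lemma frob2_spectral_filter d :
  frob2 (spectral_filter_mx d) = \sum_i a2 F V i * d i ^+ 2.
Proof.
have UtUtt : U^T *m U^T^T = 1%:M by rewrite trmxK.
rewrite frob2_mulmx_orthonormal // frob2_mul_diag.
by apply: eq_bigr => i _; rewrite mxE.
Qed.

Lemma frob2_spectral_filterA d :
  frob2 (spectral_filter_mx d *m A) = \sum_i a2 F V i * (d i * sigma 0 i) ^+ 2.
Proof.
rewrite spectral_filter_mxA frob2_mulmx_orthonormal // frob2_mul_diag.
by apply: eq_bigr => i _; rewrite mxE.
Qed.

Lemma frob2_spectral_filter_residual d :
  frob2 (F - spectral_filter_mx d *m A) =
  frob2 (F - F *m V^T *m V) + \sum_i a2 F V i * (1 - d i * sigma 0 i) ^+ 2.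
Proof.
set D := diag_mx (\row_i (1 - d i * sigma 0 i)).
have -> : F - spectral_filter_mx d *m A = (F - F *m V^T *m V) + F *m V^T *m D *m V.
  have -> : D = 1%:M - diag_mx (\row_i (d i * sigma 0 i)).
    by apply/matrixP => i j; rewrite !mxE; case: eqP => _; rewrite ?mulr1n ?mulr0n ?subr0.
  by rewrite spectral_filter_mxA mulmxBr mulmx1 mulmxBl addrA subrK.
rewrite frob2D_orthogonal; last first.
  by rewrite trmx_mul mulmxA mulmxBl -(mulmxA _ V) VVt mulmx1 subrr mul0mx.
rewrite frob2_mulmx_orthonormal // frob2_mul_diag.
by congr (_ + _); apply: eq_bigr => i _; rewrite mxE.
Qed.

Lemma invmx_conj_diag (e : 'rV[R]_r) : (forall i, e 0 i != 0) ->
  invmx (U *m diag_mx e *m U^T) = U *m diag_mx (\row_i (e 0 i)^-1) *m U^T.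
Proof.
move=> e_neq0.
have inv : U *m diag_mx e *m U^T *m (U *m diag_mx (\row_i (e 0 i)^-1) *m U^T) = 1%:M.
  rewrite !mulmxA -(mulmxA _ U^T U) UtU mulmx1 -(mulmxA U) mulmx_diag.
  have -> : \row_j (e 0 j * (\row_i (e 0 i)^-1) 0 j) = const_mx 1.
    by apply/rowP => j; rewrite !mxE mulfV.
  by rewrite diag_const_mx mulmx1.
have [unit _] := mulmx1_unit inv.
by rewrite -[LHS]mulmx1 -inv mulKmx.
Qed.

Lemma svd_gram_shift lam :
  A *m A^T + lam%:M = U *m diag_mx (\row_i (sigma 0 i ^+ 2 + lam)) *m U^T.
Proof.
have -> : diag_mx (\row_i (sigma 0 i ^+ 2 + lam)) =
          diag_mx (\row_i (sigma 0 i ^+ 2)) + lam%:M.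
  by apply/matrixP => i j; rewrite !mxE -mulrnDl.
rewrite mulmxDr mulmxDl mul_mx_scalar -scalemxAl UUt scalemx1; congr (_ + _).
rewrite !trmx_mul tr_diag_mx !mulmxA -(mulmxA _ V V^T) VVt mulmx1.
by rewrite -(mulmxA _ (diag_mx sigma)) mulmx_diag.
Qed.

Lemma mulmx_tr_svd : F *m A^T = F *m V^T *m diag_mx sigma *m U^T.
Proof. by rewrite !trmx_mul tr_diag_mx !mulmxA. Qed.

Lemma Dtilde_spectral_filter lam : 0 <= lam -> (forall i, sigma 0 i != 0) ->
  Dtilde F A lam = spectral_filter_mx (fun i => ridge_filter lam (sigma 0 i)).
Proof.
move=> lam_ge0 sigma_neq0.
rewrite /Dtilde svd_gram_shift invmx_conj_diag; last first.
  by move=> i; apply: lt0r_neq0; rewrite mxE ltr_wpDr // exprn_even_gt0 ?sigma_neq0.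
rewrite mulmx_tr_svd /spectral_filter_mx !mulmxA -(mulmxA _ U^T U) UtU mulmx1.
rewrite -(mulmxA _ (diag_mx sigma)) mulmx_diag.
by congr (_ *m diag_mx _ *m _); apply/rowP => i; rewrite !mxE.
Qed.

Lemma a2_exists_neq0 : F *m A^T != 0 -> exists j, a2 F V j != 0.
Proof.
move=> FAt_neq0.
have FVt_neq0 : F *m V^T != 0.
  by apply: contraNneq FAt_neq0; rewrite mulmx_tr_svd => ->; rewrite !mul0mx.
have : \sum_j a2 F V j != 0 by rewrite /a2 exchange_big -/(frob2 _) frob2_eq0.
move/eqP/psumr_neq0P => [j _|j /andP[_ a2j_gt0]]; first exact: a2_ge0.
by exists j; apply: lt0r_neq0.
Qed.

End SpectralFilter.

Theorem theorem8 (R : realFieldType) (r n K : nat)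
  (A : 'M[R]_(r, n)) (U : 'M[R]_r) (sigma : 'rV[R]_r) (V : 'M[R]_(r, n))
  (F : 'M[R]_(K, n)) (lam : R) :
  (r <= n)%N ->
  \rank A = r ->
  (* thin SVD A = U Sigma V *)
  U^T *m U = 1%:M -> U *m U^T = 1%:M ->
  V *m V^T = 1%:M ->
  A = U *m diag_mx sigma *m V ->
  (forall i j : 'I_r, (i <= j)%N -> sigma 0 j <= sigma 0 i) ->
  (forall i : 'I_r, 0 < sigma 0 i) ->
  F *m A^T != 0 ->
  0 < lam ->
  [/\ abs_fit_err F A (Dtilde F A lam) > abs_fit_err F A (Dstar F A),
      fit_err F A (Dtilde F A lam) > fit_err F A (Dstar F A),
      abs_spec_risk (Dtilde F A lam) < abs_spec_risk (Dstar F A)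
    & ((exists i j, [/\ i \in Omega F V, j \in Omega F V & sigma 0 i != sigma 0 j]) ->
         spec_risk A (Dtilde F A lam) < spec_risk A (Dstar F A))
      /\ ((forall i j, i \in Omega F V -> j \in Omega F V -> sigma 0 i = sigma 0 j) ->
         spec_risk A (Dtilde F A lam) = spec_risk A (Dstar F A))].
Proof.
move=> _ _ UtU UUt VVt -> _ sigma_gt0 FAt_neq0 lam_gt0.
have sigma_neq0 i : sigma 0 i != 0 by rewrite gt_eqF.
have [j aj] := a2_exists_neq0 FAt_neq0.
have A_gt0 : 0 < frob2 (U *m diag_mx sigma *m V).
  rewrite lt0r frob2_ge0 frob2_eq0 andbT.
  by apply: contraNneq FAt_neq0 => ->; rewrite trmx0 mulmx0.
rewrite Dstar_Dtilde0 !Dtilde_spectral_filter ?lexx ?ltW //.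
rewrite /fit_err /abs_fit_err /abs_spec_risk /spec_risk.
rewrite !frob2_spectral_filter_residual ?frob2_spectral_filterA ?frob2_spectral_filter //.
have a_ge0 := a2_ge0 F V; have E_ge0 := frob2_ge0 (F - F *m V^T *m V).
split.
- by rewrite ltrD2l; apply: (ridge_residual_lt a_ge0 sigma_gt0 lam_gt0 aj).
- exact: (ridge_fit_err_lt a_ge0 sigma_gt0 lam_gt0 aj E_ge0).
- exact: (ridge_norm_lt a_ge0 sigma_gt0 lam_gt0 aj).
split => [[i [i' [Oi Oi' sigma_ii']]] | sigma_const].
  rewrite !inE in Oi Oi'.
  exact: (ridge_risk_lt a_ge0 sigma_gt0 lam_gt0 A_gt0 Oi Oi' sigma_ii').
apply: (ridge_risk_eq a_ge0 sigma_gt0 lam_gt0 _ aj) => i i' ai ai'.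
by apply: sigma_const; rewrite inE.
Qed.
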